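(* Let $\mathcal I$ index a finite set of strategies for the iterated Prisoner's Dilemma (payoffs normalized with $T=1$, $S=0$), and assume $P<\tfrac12$. Suppose the strategy indexed by $i^*$ is an extortionate strategy $\mathbf p^{i^*}$ (a firm non-exceptional zero-determinant strategy with $\bar\alpha>0$) together with initial defection. If for no other $j\in\mathcal I$ is $\mathbf p^j$ firm, then $i^*$ is an evolutionarily unstable strategy for the game $\{A_{ij}\}$, and the vertex $v(i^* )$ is a repellor of the replicator dynamics: there is $\epsilon>0$ such that $1>\pi_{i^*}\ge1-\epsilon$ implies $\frac{d\pi_{i^*}}{dt}<0$.
   Context: Iterated Prisoner's Dilemma with normalized payoffs $T=1>R>P>S=0$, $2R>1$; outcomes ordered $cc,cd,dc,dd$ (own play first); payoff vectors $\mathbf S_X=(R,0,1,P)$, $\mathbf S_Y=(R,1,0,P)$, $\mathbf 1=(1,1,1,1)$, $\mathbf e_{23}=(0,1,1,0)$. A memory-one strategy vector is $\mathbf p\in[0,1]^4$, $p_i$ being the probability of playing $c$ after the $i$-th outcome, outcomes labeled from the player's own perspective; it is firm if $p_4=0$. A strategy is such a vector together with an initial play. The X Press-Dyson vector $\mathbf p-(1,1,0,0)$ decomposes uniquely as $\alpha\mathbf S_X+\beta\mathbf S_Y+\gamma\mathbf 1+\delta\mathbf e_{23}$; $\mathbf p$ is a non-exceptional zero-determinant strategy if $\delta=0$ and $\gamma>0$, and then $\bar\alpha=\alpha/\gamma$. For $i,j\in\mathcal I$, $A_{ij}$ is the long-run (Cesàro-limit) average payoff of X when X uses strategy $i$ and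 Y uses strategy $j$. Replicator dynamics on the simplex $\Delta\subset\mathbb R^{\mathcal I}$: $\frac{d\pi_i}{dt}=\pi_i(A_{i\pi}-A_{\pi\pi})$, $A_{i\pi}=\sum_j\pi_jA_{ij}$, $A_{\pi\pi}=\sum_i\pi_iA_{i\pi}$; $v(i)$ is the vertex $\pi_i=1$. $i^*$ is an evolutionarily unstable strategy (EUS) if $A_{ji^*}>A_{i^*i^*}$ for all $j\ne i^*$. *)

From Stdlib Require Import Reals List Arith.
From Coquelicot Require Import Coquelicot.
Import ListNotations.
Open Scope R_scope.

Definition sumN (n : nat) (f : nat -> R) : R :=
  fold_right Rplus 0 (map f (seq 0 n)).

(* A strategy: memory-one vector p = (p1,p2,p3,p4) (cooperation probabilities
   after cc, cd, dc, dd, own play first) together with an initial play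
   (true = cooperate, false = defect). *)
Record strategy := mkStrategy {
  p1 : R; p2 : R; p3 : R; p4 : R;
  init : bool }.

Definition pv (s : strategy) (k : nat) : R :=
  match k with 0 => p1 s | 1 => p2 s | 2 => p3 s | _ => p4 s end.

Definition valid_strategy (s : strategy) : Prop :=
  forall k, (k < 4)%nat -> 0 <= pv s k <= 1.

Definition firm (s : strategy) : Prop := p4 s = 0.

(* p - (1,1,0,0) = alpha S_X + beta S_Y + gamma 1 + delta e23,
   with S_X = (R,0,1,P), S_Y = (R,1,0,P), 1 = (1,1,1,1), e23 = (0,1,1,0). *)
Definition PD_decomp (Rr Pp : R) (s : strategy) (alpha beta gamma delta : R) : Prop :=
  p1 s - 1 = alpha * Rr + beta * Rr + gamma /\
  p2 s - 1 = alpha * 0 + beta * 1 + gamma + delta /\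
  p3 s - 0 = alpha * 1 + beta * 0 + gamma + delta /\
  p4 s - 0 = alpha * Pp + beta * Pp + gamma.

Definition ZD_with_alpha_bar (Rr Pp : R) (s : strategy) (abar : R) : Prop :=
  exists alpha beta gamma, PD_decomp Rr Pp s alpha beta gamma 0 /\ 0 < gamma /\
    abar = alpha / gamma.

Definition extortionate (Rr Pp : R) (s : strategy) : Prop :=
  firm s /\ exists abar, ZD_with_alpha_bar Rr Pp s abar /\ 0 < abar.

Definition outcome (x y : bool) : nat :=
  match x, y with
  | true, true => 0%nat | true, false => 1%nat
  | false, true => 2%nat | false, false => 3%nat end.

(* The same outcome seen from Y's perspective. *)
Definition swap (k : nat) : nat :=
  match k with 1 => 2%nat | 2 => 1%nat | _ => k end.

Definition trans (sx sy : strategy) (k l : nat) : R :=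
  let a := pv sx k in
  let b := pv sy (swap k) in
  match l with
  | 0 => a * b | 1 => a * (1 - b) | 2 => (1 - a) * b | _ => (1 - a) * (1 - b) end.

Fixpoint dist (sx sy : strategy) (n : nat) (l : nat) : R :=
  match n with
  | 0 => if Nat.eqb l (outcome (init sx) (init sy)) then 1 else 0
  | S m => sumN 4 (fun k => dist sx sy m k * trans sx sy k l)
  end.

(* X's payoff vector S_X = (R, 0, 1, P) (T = 1, S = 0). *)
Definition SX (Rr Pp : R) (k : nat) : R :=
  match k with 0 => Rr | 1 => 0 | 2 => 1 | _ => Pp end.

Definition stage_payoff (Rr Pp : R) (sx sy : strategy) (n : nat) : R :=
  sumN 4 (fun k => dist sx sy n k * SX Rr Pp k).

Definition avg_payoff (Rr Pp : R) (sx sy : strategy) (N : nat) : R :=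
  sumN (S N) (stage_payoff Rr Pp sx sy) / INR (S N).

Definition longrun (Rr Pp : R) (sx sy : strategy) : R :=
  real (Lim_seq (avg_payoff Rr Pp sx sy)).

Definition Amat (Rr Pp : R) (strat : nat -> strategy) (i j : nat) : R :=
  longrun Rr Pp (strat i) (strat j).

Definition in_simplex (n : nat) (pi : nat -> R) : Prop :=
  (forall i, (i < n)%nat -> 0 <= pi i) /\ sumN n pi = 1.

Definition A_i_pi (n : nat) (A : nat -> nat -> R) (i : nat) (pi : nat -> R) : R :=
  sumN n (fun j => pi j * A i j).

Definition A_pi_pi (n : nat) (A : nat -> nat -> R) (pi : nat -> R) : R :=
  sumN n (fun i => pi i * A_i_pi n A i pi).

Definition replicator (n : nat) (A : nat -> nat -> R) (pi : nat -> R) (i : nat) : R :=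
  pi i * (A_i_pi n A i pi - A_pi_pi n A pi).

Definition EUS (n : nat) (A : nat -> nat -> R) (istar : nat) : Prop :=
  forall j, (j < n)%nat -> j <> istar -> A j istar > A istar istar.

Definition vertex_repellor (n : nat) (A : nat -> nat -> R) (istar : nat) : Prop :=
  exists eps, 0 < eps /\
    forall pi, in_simplex n pi -> 1 > pi istar -> pi istar >= 1 - eps ->
      replicator n A pi istar < 0.

(* Against an extortioner Y (firm, so that the Press-Dyson constant is -(alpha + beta) P),
   the Press-Dyson identity says that alpha (s_Y - P) + beta (s_X - P) is, round by round,
   the increment of Y's cooperation probability; summed over N rounds it stays bounded.
   Since s_X + s_Y - 2P >= (1 - 2P) Prob(not dd), this gives
   (alpha - beta) sum (s_X - P) >= alpha (1 - 2P) sum Prob(not dd) - 1.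
   A non-firm X (p4 > 0) leaves mutual defection with probability p4 each round, so
   Prob(not dd) has Cesaro mean at least p4 / (1 + p4) > 0, and X earns strictly more than
   P in the long run; the extortioner against itself defects forever and earns exactly P.
   So the extortioner is an EUS, and near its vertex every other strategy beats it by a
   uniform margin, which makes the vertex a repellor. *)
From Pilot Require Import Defs.
From Stdlib Require Import Reals Lra Lia List Arith.
From Coquelicot Require Import Coquelicot.
(* Re-import Defs so that its [dist] shadows the metric-space [dist] of Reals. *)
Import Defs.
Open Scope R_scope.

Lemma sumN_0 f : sumN 0 f = 0.
Proof. reflexivity. Qed.

Lemma sumN_S n f : sumN (S n) f = sumN n f + f n.
Proof.
  unfold sumN. rewrite seq_S, map_app, fold_right_app. simpl.
  induction (map f (seq 0 n)) as [|x l IH]; simpl; lra.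
Qed.

Lemma sumN_ext n f g : (forall i, (i < n)%nat -> f i = g i) -> sumN n f = sumN n g.
Proof.
  induction n as [|n IH]; intros H; [reflexivity|].
  rewrite !sumN_S, IH, H; auto; lia.
Qed.

Lemma sumN_le n f g : (forall i, (i < n)%nat -> f i <= g i) -> sumN n f <= sumN n g.
Proof.
  induction n as [|n IH]; intros H; [rewrite !sumN_0; lra|].
  rewrite !sumN_S. apply Rplus_le_compat; [apply IH; intros; apply H|apply H]; lia.
Qed.

Lemma sumN_plus n f g : sumN n (fun i => f i + g i) = sumN n f + sumN n g.
Proof. induction n; [rewrite !sumN_0; lra | rewrite !sumN_S, IHn; lra]. Qed.

Lemma sumN_minus n f g : sumN n (fun i => f i - g i) = sumN n f - sumN n g.
Proof. induction n; [rewrite !sumN_0; lra | rewrite !sumN_S, IHn; lra]. Qed.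

Lemma sumN_scal n c f : sumN n (fun i => c * f i) = c * sumN n f.
Proof. induction n; [rewrite !sumN_0; lra | rewrite !sumN_S, IHn; lra]. Qed.

Lemma sumN_const n c : sumN n (fun _ => c) = INR n * c.
Proof. induction n; [rewrite sumN_0; simpl; lra | rewrite sumN_S, IHn, S_INR; lra]. Qed.

Lemma sumN_telescope n g : sumN n (fun i => g (S i) - g i) = g n - g 0%nat.
Proof. induction n; [rewrite sumN_0; lra | rewrite sumN_S, IHn; lra]. Qed.

Lemma sumN_pick n k f : (k < n)%nat ->
  sumN n f = f k + sumN n (fun j => if Nat.eqb j k then 0 else f j).
Proof.
  induction n as [|n IH]; intros Hk; [lia|]. rewrite !sumN_S.
  destruct (Nat.eq_dec n k) as [<-|Hnk].
  - rewrite Nat.eqb_refl.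
    rewrite (sumN_ext n (fun j => if Nat.eqb j n then 0 else f j) f); [lra|].
    intros j Hj. destruct (Nat.eqb_spec j n); [lia|reflexivity].
  - apply Nat.eqb_neq in Hnk. rewrite Hnk, IH by (apply Nat.eqb_neq in Hnk; lia). lra.
Qed.

Lemma sumN_nonneg n f : (forall j, (j < n)%nat -> 0 <= f j) -> 0 <= sumN n f.
Proof.
  intros Hf. rewrite <- (Rmult_0_r (INR n)), <- sumN_const. apply sumN_le. auto.
Qed.

Lemma sumN_ge_term n k f : (forall j, (j < n)%nat -> 0 <= f j) -> (k < n)%nat ->
  f k <= sumN n f.
Proof.
  intros Hf Hk. rewrite (sumN_pick n k f Hk).
  assert (0 <= sumN n (fun j => if Nat.eqb j k then 0 else f j)); [|lra].
  apply sumN_nonneg. intros j Hj. destruct (Nat.eqb j k); [lra|auto].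
Qed.

Lemma sumN_split_le n k (w f : nat -> R) c : (k < n)%nat ->
  (forall j, (j < n)%nat -> j <> k -> f j <= c * w j) ->
  sumN n f <= f k + c * (sumN n w - w k).
Proof.
  intros Hk Hf. rewrite (sumN_pick n k f Hk), (sumN_pick n k w Hk).
  assert (sumN n (fun j => if Nat.eqb j k then 0 else f j)
          <= sumN n (fun j => c * (if Nat.eqb j k then 0 else w j))).
  { apply sumN_le. intros j Hj. destruct (Nat.eqb_spec j k); [lra|auto]. }
  rewrite sumN_scal in H. lra.
Qed.

Lemma finite_pos_lower_bound n k (g : nat -> R) :
  (forall i, (i < n)%nat -> i <> k -> 0 < g i) ->
  exists d, 0 < d /\ forall i, (i < n)%nat -> i <> k -> d <= g i.
Proof.
  induction n as [|n IH]; intros Hg.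
  - exists 1. split; [lra | intros; lia].
  - destruct IH as (d & Hd & Hdg); [intros; apply Hg; auto; lia|].
    destruct (Nat.eq_dec n k) as [<-|Hnk].
    + exists d. split; auto. intros i Hi Hin. apply Hdg; auto; lia.
    + exists (Rmin d (g n)). split; [apply Rmin_pos; auto|].
      intros i Hi Hik. destruct (Nat.eq_dec i n) as [->|Hin]; [apply Rmin_r|].
      eapply Rle_trans; [apply Rmin_l | apply Hdg; auto; lia].
Qed.

Lemma real_Lim_seq_gt (u : nat -> R) l a b M : 0 < a ->
  (forall N, l + a - b / INR (S N) <= u N) -> (forall N, u N <= M) ->
  l < real (Lim_seq u).
Proof.
  intros Ha Hlow Hup.
  destruct (INR_unbounded (2 * Rabs b / a)) as [N0 HN0].
  assert (Hev : Hierarchy.eventually (fun N => l + a / 2 <= u N)).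
  { exists N0. intros N HN. specialize (Hlow N).
    assert (Hm : INR N0 <= INR (S N)) by (apply le_INR; lia).
    assert (Hm0 : 0 < INR (S N)) by (apply lt_0_INR; lia).
    assert (Hb : b <= a / 2 * INR (S N)).
    { assert (2 * Rabs b / a * a = 2 * Rabs b) by (field; lra).
      pose proof (Rle_abs b). nra. }
    assert (b / INR (S N) <= a / 2).
    { apply (Rmult_le_reg_r (INR (S N))); [lra|]. field_simplify; lra. }
    lra. }
  apply Lim_seq_le_loc in Hev.
  assert (Hub : Rbar_le (Lim_seq u) (Lim_seq (fun _ => M))).
  { apply Lim_seq_le_loc. exists 0%nat. auto. }
  rewrite Lim_seq_const in Hev, Hub.
  destruct (Lim_seq u); simpl in *; try contradiction. lra.
Qed.

Lemma valid_p2 s : valid_strategy s -> p2 s <= 1.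
Proof. intros H. apply (H 1%nat). lia. Qed.

Lemma valid_p4 s : valid_strategy s -> 0 <= p4 s <= 1.
Proof. intros H. apply (H 3%nat). lia. Qed.

Lemma dist_S sx sy n l : dist sx sy (S n) l =
  dist sx sy n 0 * trans sx sy 0 l + (dist sx sy n 1 * trans sx sy 1 l +
  (dist sx sy n 2 * trans sx sy 2 l + (dist sx sy n 3 * trans sx sy 3 l + 0))).
Proof. reflexivity. Qed.

Lemma dist_sum sx sy n :
  dist sx sy n 0 + dist sx sy n 1 + dist sx sy n 2 + dist sx sy n 3 = 1.
Proof.
  induction n as [|n IH].
  - simpl. destruct (init sx), (init sy); simpl; lra.
  - rewrite <- IH, !dist_S. unfold trans. ring.
Qed.

Lemma trans_nonneg sx sy k l : valid_strategy sx -> valid_strategy sy -> (k < 4)%nat ->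
  0 <= trans sx sy k l.
Proof.
  intros Vx Vy Hk. pose proof (Vx k Hk) as Ha.
  assert (Hb : 0 <= pv sy (swap k) <= 1).
  { apply Vy. destruct k as [|[|[|[|k]]]]; simpl; lia. }
  unfold trans. destruct l as [|[|[|l]]]; apply Rmult_le_pos; lra.
Qed.

Lemma dist_nonneg sx sy : valid_strategy sx -> valid_strategy sy ->
  forall n l, 0 <= dist sx sy n l.
Proof.
  intros Vx Vy n. induction n as [|n IH]; intros l.
  - simpl. destruct (Nat.eqb _ _); lra.
  - rewrite dist_S.
    repeat apply Rplus_le_le_0_compat; try lra;
      apply Rmult_le_pos; auto; apply trans_nonneg; auto; lia.
Qed.

Lemma stage_payoff_eq Rr Pp sx sy n : stage_payoff Rr Pp sx sy n =
  dist sx sy n 0 * Rr + dist sx sy n 2 + dist sx sy n 3 * Pp.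
Proof. unfold stage_payoff, sumN. simpl. ring. Qed.

Lemma stage_payoff_le_1 Rr Pp sx sy n : valid_strategy sx -> valid_strategy sy ->
  Rr <= 1 -> Pp <= 1 -> stage_payoff Rr Pp sx sy n <= 1.
Proof.
  intros Vx Vy HR HP. rewrite stage_payoff_eq, <- (dist_sum sx sy n).
  pose proof (dist_nonneg sx sy Vx Vy n 0). pose proof (dist_nonneg sx sy Vx Vy n 1).
  pose proof (dist_nonneg sx sy Vx Vy n 3). nra.
Qed.

Lemma avg_payoff_le_1 Rr Pp sx sy N : valid_strategy sx -> valid_strategy sy ->
  Rr <= 1 -> Pp <= 1 -> avg_payoff Rr Pp sx sy N <= 1.
Proof.
  intros Vx Vy HR HP. unfold avg_payoff.
  assert (Hm : 0 < INR (S N)) by (apply lt_0_INR; lia).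
  assert (sumN (S N) (stage_payoff Rr Pp sx sy) <= sumN (S N) (fun _ => 1)).
  { apply sumN_le. intros. apply stage_payoff_le_1; auto. }
  rewrite sumN_const in H. apply (Rmult_le_reg_r (INR (S N))); [lra|].
  field_simplify; lra.
Qed.

Lemma dist_firm_defector_self s : init s = false -> firm s -> forall n,
  dist s s n 0 = 0 /\ dist s s n 1 = 0 /\ dist s s n 2 = 0 /\ dist s s n 3 = 1.
Proof.
  unfold firm. intros Hi Hp n. induction n as [|n IH].
  - simpl. rewrite Hi. simpl. lra.
  - rewrite !dist_S. unfold trans. simpl. rewrite Hp.
    destruct IH as (-> & -> & -> & ->). lra.
Qed.

Lemma longrun_firm_defector_self Rr Pp s : init s = false -> firm s ->
  longrun Rr Pp s s = Pp.
Proof.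
  intros Hi Hp. unfold longrun.
  rewrite (Lim_seq_ext _ (fun _ => Pp)), Lim_seq_const; [reflexivity|].
  intros N. unfold avg_payoff.
  rewrite (sumN_ext _ _ (fun _ => Pp)), sumN_const.
  - field. apply not_0_INR. lia.
  - intros i _. rewrite stage_payoff_eq.
    destruct (dist_firm_defector_self s Hi Hp i) as (-> & _ & -> & ->). ring.
Qed.

(* Y's payoff vector in X's outcome order is (R, 1, 0, P). *)
Definition opp_stage_payoff Rr Pp sx sy n : R :=
  dist sx sy n 0 * Rr + dist sx sy n 1 + dist sx sy n 3 * Pp.

Definition opp_coop_prob sx sy n : R := dist sx sy n 0 + dist sx sy n 2.

Definition nondd_prob sx sy n : R := 1 - dist sx sy n 3.

Lemma press_dyson_identity Rr Pp sx sy al be ga n : PD_decomp Rr Pp sy al be ga 0 ->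
  opp_coop_prob sx sy (S n) - opp_coop_prob sx sy n =
  al * opp_stage_payoff Rr Pp sx sy n + be * stage_payoff Rr Pp sx sy n + ga.
Proof.
  intros (D1 & D2 & D3 & D4).
  rewrite stage_payoff_eq. unfold opp_coop_prob, opp_stage_payoff.
  rewrite !dist_S. unfold trans. simpl.
  replace (p1 sy) with (1 + al * Rr + be * Rr + ga) by lra.
  replace (p2 sy) with (1 + be + ga) by lra.
  replace (p3 sy) with (al + ga) by lra.
  replace (p4 sy) with (al * Pp + be * Pp + ga) by lra.
  pose proof (dist_sum sx sy n).
  replace (dist sx sy n 3)
    with (1 - dist sx sy n 0 - dist sx sy n 1 - dist sx sy n 2) by lra.
  ring.
Qed.

Lemma nondd_prob_bounds sx sy n : valid_strategy sx -> valid_strategy sy ->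
  0 <= nondd_prob sx sy n <= 1.
Proof.
  intros Vx Vy. unfold nondd_prob. pose proof (dist_sum sx sy n).
  pose proof (dist_nonneg sx sy Vx Vy n 0). pose proof (dist_nonneg sx sy Vx Vy n 1).
  pose proof (dist_nonneg sx sy Vx Vy n 2). pose proof (dist_nonneg sx sy Vx Vy n 3). lra.
Qed.

Lemma opp_coop_prob_bounds sx sy n : valid_strategy sx -> valid_strategy sy ->
  0 <= opp_coop_prob sx sy n <= 1.
Proof.
  intros Vx Vy. unfold opp_coop_prob. pose proof (dist_sum sx sy n).
  pose proof (dist_nonneg sx sy Vx Vy n 0). pose proof (dist_nonneg sx sy Vx Vy n 1).
  pose proof (dist_nonneg sx sy Vx Vy n 2). pose proof (dist_nonneg sx sy Vx Vy n 3). lra.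
Qed.

(* Whatever Y does, dd is followed by dd with probability at most 1 - p4 sx. *)
Lemma nondd_prob_S_ge sx sy n : valid_strategy sx -> valid_strategy sy ->
  p4 sx * (1 - nondd_prob sx sy n) <= nondd_prob sx sy (S n).
Proof.
  intros Vx Vy. unfold nondd_prob. rewrite dist_S. unfold trans. simpl.
  assert (Hprod : forall a b, 0 <= a <= 1 -> 0 <= b <= 1 -> 0 <= (1 - a) * (1 - b) <= 1)
    by (intros; split; nra).
  pose proof (Hprod _ _ (Vx 0%nat ltac:(lia)) (Vy 0%nat ltac:(lia))).
  pose proof (Hprod _ _ (Vx 1%nat ltac:(lia)) (Vy 2%nat ltac:(lia))).
  pose proof (Hprod _ _ (Vx 2%nat ltac:(lia)) (Vy 1%nat ltac:(lia))).
  pose proof (valid_p4 sx Vx). pose proof (valid_p4 sy Vy). simpl in *.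
  pose proof (dist_sum sx sy n).
  pose proof (dist_nonneg sx sy Vx Vy n 0). pose proof (dist_nonneg sx sy Vx Vy n 1).
  pose proof (dist_nonneg sx sy Vx Vy n 2). pose proof (dist_nonneg sx sy Vx Vy n 3).
  assert (dist sx sy n 3 * ((1 - p4 sx) * (1 - p4 sy)) <= dist sx sy n 3 * (1 - p4 sx)).
  { apply Rmult_le_compat_l; nra. }
  nra.
Qed.

Lemma sum_nondd_prob_ge sx sy m : valid_strategy sx -> valid_strategy sy ->
  p4 sx * INR m - 1 <= (1 + p4 sx) * sumN m (nondd_prob sx sy).
Proof.
  intros Vx Vy.
  assert (Hstep : sumN m (fun n => p4 sx * (1 - nondd_prob sx sy n))
                  <= sumN m (fun n => nondd_prob sx sy (S n))).
  { apply sumN_le. intros. apply nondd_prob_S_ge; auto. }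
  rewrite sumN_scal, sumN_minus, sumN_const in Hstep.
  pose proof (sumN_telescope m (nondd_prob sx sy)) as Htel. rewrite sumN_minus in Htel.
  pose proof (nondd_prob_bounds sx sy m Vx Vy).
  pose proof (nondd_prob_bounds sx sy 0 Vx Vy). lra.
Qed.

Lemma payoff_sum_ge Rr Pp sx sy n : valid_strategy sx -> valid_strategy sy -> 1 <= 2 * Rr ->
  (1 - 2 * Pp) * nondd_prob sx sy n
  <= stage_payoff Rr Pp sx sy n + opp_stage_payoff Rr Pp sx sy n - 2 * Pp.
Proof.
  intros Vx Vy HR. rewrite stage_payoff_eq. unfold opp_stage_payoff, nondd_prob.
  pose proof (dist_sum sx sy n). pose proof (dist_nonneg sx sy Vx Vy n 0).
  replace (dist sx sy n 3)
    with (1 - dist sx sy n 0 - dist sx sy n 1 - dist sx sy n 2) by lra.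
  nra.
Qed.

Section AgainstFirmZD.

Variables (Rr Pp al be ga : R) (sx sy : strategy).
Hypotheses (HR1 : Rr <= 1) (H2R : 1 <= 2 * Rr) (H2P : 2 * Pp < 1).
Hypotheses (Vx : valid_strategy sx) (Vy : valid_strategy sy).
Hypotheses (Hdec : PD_decomp Rr Pp sy al be ga 0) (Hfirm : firm sy)
  (Hal : 0 < al) (Hbe : be < al).

Let K := al * (1 - 2 * Pp) / (1 + p4 sx).

Lemma firm_ZD_payoff_relation n :
  al * (opp_stage_payoff Rr Pp sx sy n - Pp) + be * (stage_payoff Rr Pp sx sy n - Pp) =
  opp_coop_prob sx sy (S n) - opp_coop_prob sx sy n.
Proof.
  rewrite (press_dyson_identity Rr Pp sx sy al be ga n Hdec).
  destruct Hdec as (_ & _ & _ & D4). unfold firm in Hfirm.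
  replace ga with (- (al + be) * Pp) by lra. ring.
Qed.

Lemma excess_payoff_sum_ge m :
  K * p4 sx * INR m - (K + 1)
  <= (al - be) * sumN m (fun n => stage_payoff Rr Pp sx sy n - Pp).
Proof.
  set (SX := sumN m (fun n => stage_payoff Rr Pp sx sy n - Pp)).
  set (SY := sumN m (fun n => opp_stage_payoff Rr Pp sx sy n - Pp)).
  set (E := sumN m (nondd_prob sx sy)).
  assert (Hpd : al * SY + be * SX <= 1).
  { unfold SX, SY. rewrite <- !sumN_scal, <- sumN_plus.
    rewrite (sumN_ext m _ (fun n => opp_coop_prob sx sy (S n) - opp_coop_prob sx sy n))
      by (intros; apply firm_ZD_payoff_relation).
    rewrite sumN_telescope.
    pose proof (opp_coop_prob_bounds sx sy m Vx Vy).
    pose proof (opp_coop_prob_bounds sx sy 0 Vx Vy). lra. }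
  assert (Hsum : (1 - 2 * Pp) * E <= SX + SY).
  { unfold SX, SY, E. rewrite <- sumN_scal, <- sumN_plus. apply sumN_le.
    intros n _. pose proof (payoff_sum_ge Rr Pp sx sy n Vx Vy H2R). lra. }
  assert (HE : p4 sx * INR m - 1 <= (1 + p4 sx) * E) by (apply sum_nondd_prob_ge; auto).
  pose proof (valid_p4 sx Vx).
  assert (HK : K * (p4 sx * INR m - 1) <= al * (1 - 2 * Pp) * E).
  { unfold K. apply (Rmult_le_reg_r (1 + p4 sx)); [lra|].
    replace (al * (1 - 2 * Pp) / (1 + p4 sx) * (p4 sx * INR m - 1) * (1 + p4 sx))
      with (al * (1 - 2 * Pp) * (p4 sx * INR m - 1)) by (field; lra).
    apply (Rmult_le_compat_l (al * (1 - 2 * Pp))) in HE; [lra | nra]. }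
  assert (al * ((1 - 2 * Pp) * E) <= al * (SX + SY)) by (apply Rmult_le_compat_l; lra).
  nra.
Qed.

Lemma longrun_gt_P_against_firm_ZD : 0 < p4 sx -> Pp < longrun Rr Pp sx sy.
Proof.
  intros Hq. unfold longrun.
  assert (HK : 0 < K) by (unfold K; apply Rdiv_lt_0_compat; nra).
  apply (real_Lim_seq_gt _ Pp (K * p4 sx / (al - be)) ((K + 1) / (al - be)) 1).
  - apply Rdiv_lt_0_compat; nra.
  - intros N. pose proof (excess_payoff_sum_ge (S N)) as Hm.
    assert (Hm0 : 0 < INR (S N)) by (apply lt_0_INR; lia).
    unfold avg_payoff. rewrite sumN_minus, sumN_const in Hm.
    apply (Rmult_le_reg_r (INR (S N) * (al - be))); [nra|].
    field_simplify; [nra | lra | lra].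
  - intros N. apply avg_payoff_le_1; auto. lra.
Qed.

End AgainstFirmZD.

Lemma extortionate_weights Rr Pp s : valid_strategy s -> extortionate Rr Pp s ->
  exists al be ga, PD_decomp Rr Pp s al be ga 0 /\ 0 < al /\ be < al.
Proof.
  intros Vs (_ & abar & (al & be & ga & Hdec & Hga & ->) & Habar).
  exists al, be, ga. split; auto.
  assert (Hal : 0 < al).
  { replace al with (al / ga * ga) by (field; lra). apply Rmult_lt_0_compat; lra. }
  destruct Hdec as (_ & D2 & _ & _). pose proof (valid_p2 s Vs). lra.
Qed.

Lemma A_i_pi_sub_A_pi_pi n A k pi : sumN n pi = 1 ->
  A_i_pi n A k pi - A_pi_pi n A pi =
  sumN n (fun i => pi i * (A_i_pi n A k pi - A_i_pi n A i pi)).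
Proof.
  intros Hsum.
  rewrite (sumN_ext n _ (fun i => A_i_pi n A k pi * pi i - pi i * A_i_pi n A i pi))
    by (intros; ring).
  rewrite sumN_minus, sumN_scal, Hsum. unfold A_pi_pi. ring.
Qed.

(* Near v(k), every strategy i <> k earns at least d/4 more than k against the
   population, where d is the smallest EUS margin and M bounds |A|. *)
Lemma vertex_repellor_of_EUS n A k : (k < n)%nat -> EUS n A k -> vertex_repellor n A k.
Proof.
  intros Hk HE.
  destruct (finite_pos_lower_bound n k (fun i => A i k - A k k)) as (d & Hd & Hgap).
  { intros i Hi Hik. specialize (HE i Hi Hik). lra. }
  set (M := sumN n (fun i => sumN n (fun j => Rabs (A i j)))).
  assert (HM : forall i j, (i < n)%nat -> (j < n)%nat -> Rabs (A i j) <= M).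
  { intros i j Hi Hj. eapply Rle_trans.
    - apply (sumN_ge_term n j (fun j => Rabs (A i j))); auto. intros; apply Rabs_pos.
    - apply (sumN_ge_term n i (fun i => sumN n (fun j => Rabs (A i j)))); auto.
      intros i' _. apply sumN_nonneg. intros; apply Rabs_pos. }
  assert (HM0 : 0 <= M) by (eapply Rle_trans; [apply Rabs_pos | apply (HM k k Hk Hk)]).
  set (eps := Rmin (1 / 2) (d / (8 * (M + 1)))).
  assert (He0 : 0 < eps) by (apply Rmin_pos; [lra | apply Rdiv_lt_0_compat; lra]).
  assert (HeM : 2 * M * eps <= d / 4).
  { assert (eps <= d / (8 * (M + 1))) by apply Rmin_r.
    assert (2 * M * (d / (8 * (M + 1))) <= d / 4).
    { apply (Rmult_le_reg_r (8 * (M + 1))); [lra|]. field_simplify; nra. }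
    nra. }
  exists eps. split; auto. intros pi (Hpos & Hsum) Hlt Hge.
  assert (Hhalf : 1 / 2 <= pi k) by (assert (eps <= 1 / 2) by apply Rmin_l; lra).
  assert (Hbeat : forall i, (i < n)%nat -> i <> k ->
            A_i_pi n A k pi - A_i_pi n A i pi <= - d / 4).
  { intros i Hi Hik. unfold A_i_pi. rewrite <- sumN_minus.
    eapply Rle_trans.
    { apply (sumN_split_le n k pi _ (2 * M) Hk). intros j Hj _.
      pose proof (Rle_abs (A k j)). pose proof (Rabs_maj2 (A i j)).
      pose proof (HM k j Hk Hj). pose proof (HM i j Hi Hj). pose proof (Hpos j Hj).
      rewrite <- Rmult_minus_distr_l, (Rmult_comm (2 * M)).
      apply Rmult_le_compat_l; lra. }
    pose proof (Hgap i Hi Hik). rewrite Hsum. nra. }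
  assert (Hgain : A_i_pi n A k pi - A_pi_pi n A pi <= - d / 4 * (1 - pi k)).
  { rewrite A_i_pi_sub_A_pi_pi by auto. eapply Rle_trans.
    { apply (sumN_split_le n k pi _ (- d / 4) Hk). intros j Hj Hjk.
      pose proof (Hbeat j Hj Hjk). pose proof (Hpos j Hj). nra. }
    rewrite Hsum. cbv beta. rewrite Rminus_diag, Rmult_0_r. lra. }
  assert (Hneg : - d / 4 * (1 - pi k) < 0).
  { replace (- d / 4 * (1 - pi k)) with (- (d / 4 * (1 - pi k))) by field.
    assert (0 < d / 4 * (1 - pi k)) by (apply Rmult_lt_0_compat; lra). lra. }
  unfold replicator. rewrite <- (Rmult_0_r (pi k)).
  apply Rmult_lt_compat_l; lra.
Qed.

Theorem theorem4p10 (Rr Pp : R) (n : nat) (strat : nat -> strategy) (istar : nat) :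
  1 > Rr -> Rr > Pp -> Pp > 0 -> 2 * Rr > 1 -> Pp < 1 / 2 ->
  (forall i, (i < n)%nat -> valid_strategy (strat i)) ->
  (istar < n)%nat ->
  extortionate Rr Pp (strat istar) ->
  init (strat istar) = false ->
  (forall j, (j < n)%nat -> j <> istar -> ~ firm (strat j)) ->
  EUS n (Amat Rr Pp strat) istar /\ vertex_repellor n (Amat Rr Pp strat) istar.
Proof.
  intros HR1 HRP HP0 H2R HP2 Hv Hi Hext Hinit Hnf.
  assert (HE : EUS n (Amat Rr Pp strat) istar).
  { intros j Hj Hji. unfold Amat.
    rewrite longrun_firm_defector_self by (auto; apply Hext).
    destruct (extortionate_weights Rr Pp _ (Hv istar Hi) Hext)
      as (al & be & ga & Hdec & Hal & Hbe).
    apply Rlt_gt, (longrun_gt_P_against_firm_ZD Rr Pp al be ga); auto; try lra.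
    - apply Hext.
    - pose proof (valid_p4 _ (Hv j Hj)). pose proof (Hnf j Hj Hji). unfold firm in *. lra. }
  split; auto. apply vertex_repellor_of_EUS; auto.
Qed.
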